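(* Persistence equivalence and graph equivalence of discrete Morse functions on graphs are independent: there exist a finite tree $T$ with $n$ simplices and discrete Morse functions on $T$ that are graph equivalent but not persistence equivalent, and discrete Morse functions on $T$ that are persistence equivalent but not graph equivalent.
   Context: For a finite simple graph $G$, its simplices are its vertices and edges; write $v<e$ if vertex $v$ is an endpoint of edge $e$; $n$ is the total number of simplices. A discrete Morse function is a function $f$ from the simplices to $[0,n]$ such that: (i) $v<e$ implies $f(v)\le f(e)$; (ii) $\min f=0$; (iii) every value is attained by at most two simplices, and if $f(\sigma)=f(\tau)$ with $\sigma\neq\tau$ then one is an endpoint of the other; (iv) if a value $f(\sigma)$ is attained only by $\sigma$, then $f(\sigma)\in\mathbb{N}$; such $\sigma$ is critical and $f(\sigma)$ a critical value. With critical values $c_0<\dots<c_{m-1}$, the level subcomplexes $G_{c_i}=\{\sigma:f(\sigma)\le c_i\}$ form a filtration whose persistent homology (over a field) gives the persistence diagram $D_f$; $f,g$ are persistence equivalent if $D_f=D_g$. If $f,g$ have critical values $a_0<\dots<a_{m-1}$ and $c_0<\dots<c_{m-1}$ respectively (same number $m$), they are graph equivalent if $G_{a_i}\cong G_{c_i}$ as graphs for every $0\le i\le m-1$ (level subcomplexes taken for $f$ and $g$ respectively). *)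

From HB Require Import structures.
From mathcomp Require Import all_boot all_order all_algebra.
Set Implicit Arguments. Unset Strict Implicit. Unset Printing Implicit Defensive.
Import Order.TTheory GRing.Theory Num.Theory.
Local Open Scope ring_scope.

(* Simplices are encoded in V + {set V}:
   inl v is the vertex v, inr A is the edge A (when is_edge e A). *)

Section Graphs.
Variables (V : finType) (e : rel V).

Definition simple_graph : Prop := irreflexive e /\ symmetric e.

Definition is_edge (A : {set V}) : bool :=
  [exists x, exists y, e x y && (A == [set x; y])].

Definition edges : {set {set V}} := [set A | is_edge A].

Definition is_simplex (s : V + {set V}) : bool :=
  match s with inl _ => true | inr A => is_edge A end.

Definition face (s t : V + {set V}) : bool :=
  match s, t with inl v, inr A => v \in A | _, _ => false end.

Definition n_simplices : nat := (#|V| + #|edges|)%N.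

Definition connected_graph : Prop := forall x y, connect e x y.

Definition acyclic_graph : Prop :=
  forall s : seq V, (3 <= size s)%N -> ~~ (cycle e s && uniq s).

Definition is_tree : Prop :=
  [/\ simple_graph, (0 < #|V|)%N, connected_graph & acyclic_graph].

Variable R : realFieldType.
Implicit Types f g : V + {set V} -> R.

Definition critical f (s : V + {set V}) : bool :=
  is_simplex s && [forall t, (is_simplex t && (f t == f s)) ==> (t == s)].

Definition discrete_morse f : Prop :=
  (forall v A, is_edge A -> v \in A -> f (inl v) <= f (inr A)) /\
  (forall s, is_simplex s -> 0 <= f s <= (n_simplices)%:R) /\
  (exists2 s, is_simplex s & f s = 0) /\
  (forall s t u, is_simplex s -> is_simplex t -> is_simplex u ->
     s != t -> t != u -> s != u -> ~ (f s = f t /\ f t = f u)) /\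
  (forall s t, is_simplex s -> is_simplex t -> s != t -> f s = f t ->
     face s t || face t s) /\
  (forall s, critical f s -> exists k : nat, f s = k%:R).

Definition crit_vals f : seq R :=
  sort <=%R (undup [seq f s | s <- enum [pred s | critical f s]]).

Definition level_V f (c : R) : {set V} := [set v | f (inl v) <= c].
Definition level_E f (c : R) : {set {set V}} :=
  [set A | is_edge A && (f (inr A) <= c)].

Definition subgraph_iso (VS1 : {set V}) (ES1 : {set {set V}})
                        (VS2 : {set V}) (ES2 : {set {set V}}) : Prop :=
  exists h : V -> V,
    [/\ {in VS1 &, injective h}, h @: VS1 = VS2 &
        (fun A : {set V} => h @: A) @: ES1 = ES2].

Definition graph_equiv f g : Prop :=
  size (crit_vals f) = size (crit_vals g) /\
  forall i, (i < size (crit_vals f))%N ->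
    subgraph_iso (level_V f (nth 0 (crit_vals f) i))
                 (level_E f (nth 0 (crit_vals f) i))
                 (level_V g (nth 0 (crit_vals g) i))
                 (level_E g (nth 0 (crit_vals g) i)).

Variable F : fieldType.

Definition C0 := {ffun V -> F^o}.
Definition C1 := {ffun {set V} -> F^o}.

Definition chi0 (v : V) : C0 := [ffun x => (x == v)%:R].
Definition chi1 (A : {set V}) : C1 := [ffun B => (B == A)%:R].

(* boundary of the edge A = {x,y}, oriented by enum_rank: y - x when x < y *)
Definition bd (A : {set V}) : C0 :=
  [ffun v => if v \in A then
               (if [exists w in A, (enum_rank w < enum_rank v)%N] then 1 else -1)
             else 0].

Definition boundary (phi : C1) : C0 := \sum_(A in edges) phi A *: bd A.

Definition chains0 (VS : {set V}) : {vspace C0} := <<[seq chi0 v | v <- enum VS]>>%VS.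
Definition chains1 (ES : {set {set V}}) : {vspace C1} := <<[seq chi1 A | A <- enum ES]>>%VS.
Definition cycles0 VS : {vspace C0} := chains0 VS.
Definition bounds0 (ES : {set {set V}}) : {vspace C0} := <<[seq bd A | A <- enum ES]>>%VS.
Definition cycles1 ES : {vspace C1} := (chains1 ES :&: lker (linfun boundary))%VS.
Definition bounds1 (ES : {set {set V}}) : {vspace C1} := 0%VS.

Definition pbetti (p : nat) (K L : {set V} * {set {set V}}) : nat :=
  match p with
  | 0 => (\dim (cycles0 K.1) - \dim (cycles0 K.1 :&: bounds0 L.2))%N
  | 1 => (\dim (cycles1 K.2) - \dim (cycles1 K.2 :&: bounds1 L.2))%N
  | _ => 0%N
  end.

(* filtration of f, shifted: filt f 0 = empty complex, filt f (i+1) = G_{c_i} *)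
Definition filt f (k : nat) : {set V} * {set {set V}} :=
  if k is k'.+1 then (level_V f (nth 0 (crit_vals f) k'),
                      level_E f (nth 0 (crit_vals f) k'))
  else (set0, set0).

(* beta_p^{i,j} with i,j in {-1,0,...,m-1} (index -1 = empty complex) *)
Definition pb f p (i j : nat) : int := (pbetti p (filt f i) (filt f j))%:Z.

Definition mult f p (i j : nat) : int :=
  pb f p i.+1 j - pb f p i.+1 j.+1 - pb f p i j + pb f p i j.+1.
Definition mult_inf f p (i : nat) : int :=
  let m := size (crit_vals f) in pb f p i.+1 m - pb f p i m.

(* persistence diagram D_f in dimension p, as a multiset of points
   (b, d) with d = None standing for +infinity *)
Definition pdiagram f (p : nat) (b : R) (d : option R) : int :=
  let cv := crit_vals f in let m := size cv in
  (\sum_(i < m) \sum_(j < m | (i < j)%N)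
      (if (b == nth 0 cv i) && (d == Some (nth 0 cv j)) then mult f p i j else 0))
  + \sum_(i < m) (if (b == nth 0 cv i) && (d == None) then mult_inf f p i else 0).

Definition persistence_equiv f g : Prop :=
  forall p b d, pdiagram f p b d = pdiagram g p b d.

End Graphs.

From HB Require Import structures.
From mathcomp Require Import all_boot all_order all_algebra zify.

(* Take the path 0 - 1 - 2 and discrete Morse functions f, g, p whose values on
   (0, 1, 2, {0,1}, {1,2}) are
     f = (0, 1/2, 1, 1/2, 2),  g = (0, 1/2, 1, 1/2, 3),  p = (0, 1, 3, 2, 3).
   f and g have the same critical simplices (0, 2, {1,2}), hence the same level
   subcomplexes: a point, the edge {0,1} plus the vertex 2, the whole path. But the
   0-dimensional class born at the second critical value dies at 2 for f and at 3
   for g, so their diagrams differ. The critical simplices of p are 0, 1, {0,1} with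
   values 0, 1, 2, so p has the same diagram as f, {(0,oo), (1,2)}, while its second
   level subcomplex has two vertices instead of three. *)

Set Implicit Arguments. Unset Strict Implicit. Unset Printing Implicit Defensive.
Import Order.TTheory GRing.Theory Num.Theory.
Local Open Scope ring_scope.

Lemma inj_in_of_uniq_map (T1 T2 : eqType) (f : T1 -> T2) (s : seq T1) :
  uniq (map f s) -> {in s &, injective f}.
Proof.
elim: s => [|z s IH] //= /andP [fz_notin uniq_fs] x y.
rewrite !inE => /predU1P [->|xs] /predU1P [->|ys] fxy //.
- by rewrite fxy map_f in fz_notin.
- by rewrite -fxy map_f in fz_notin.
- exact: IH.
Qed.

Section MorseFunctions.
Variables (V : finType) (e : rel V) (R : realFieldType).
Implicit Types (f : V + {set V} -> R) (s t : V + {set V}).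

Lemma criticalP f s :
  reflect (is_simplex e s /\ forall t, is_simplex e t -> f t = f s -> t = s)
          (critical e f s).
Proof.
apply: (iffP andP) => [[simp_s /forallP crit_s] | [simp_s crit_s]].
  split=> // t simp_t fts; apply/eqP.
  by have /implyP := crit_s t; apply; rewrite simp_t fts eqxx.
split=> //; apply/forallP => t; apply/implyP => /andP [simp_t /eqP fts].
by rewrite (crit_s t simp_t fts).
Qed.

Lemma crit_vals_uniq f : uniq (crit_vals e f).
Proof. by rewrite sort_uniq undup_uniq. Qed.

Lemma crit_valsE f (ss : seq (V + {set V})) :
  critical e f =i ss -> sorted <%R (map f ss) -> crit_vals e f = map f ss.
Proof.
move=> crit_ss /lt_sorted_is_uniq_le /andP [uniq_fss sorted_fss].
rewrite /crit_vals -[RHS](sort_le_id sorted_fss).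
apply/perm_sortP; [exact: le_total | exact: le_trans | exact: le_anti |].
apply: uniq_perm; rewrite ?undup_uniq // => x.
rewrite mem_undup; apply/mapP/mapP => -[s s_crit ->]; exists s => //.
- by rewrite -crit_ss -(mem_enum [pred s | critical e f s]).
- by rewrite mem_enum /= crit_ss.
Qed.

Lemma filt_edges f i A : A \in (filt e f i).2 -> is_edge e A.
Proof. by case: i => [|i] /=; rewrite inE // => /andP []. Qed.

Section HalfIntegerValued.
Variable h : V + {set V} -> nat.

(* A regular vertex/edge pair must share its value, which is kept off the integers
   by halving, so that all critical values can be natural numbers. *)
Definition halved s : R := (h s)%:R / 2%:R.

Lemma halved_double s k : h s = k.*2 -> halved s = k%:R.
Proof. by rewrite /halved => ->; rewrite -muln2 natrM mulfK ?pnatr_eq0. Qed.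

Lemma halved_even s : ~~ odd (h s) -> halved s = (h s)./2%:R.
Proof.
move=> h_even; apply: halved_double.
by rewrite -[in LHS](odd_double_half (h s)) (negbTE h_even).
Qed.

Lemma ler_halved s t : (halved s <= halved t) = (h s <= h t)%N.
Proof. by rewrite /halved ler_pM2r ?invr_gt0 ?ltr0n // ler_nat. Qed.

Lemma ltr_halved s t : (halved s < halved t) = (h s < h t)%N.
Proof. by rewrite /halved ltr_pM2r ?invr_gt0 ?ltr0n // ltr_nat. Qed.

Lemma eqr_halved s t : (halved s == halved t) = (h s == h t).
Proof. by rewrite eq_le !ler_halved -eqn_leq. Qed.

Lemma halved_le_nat s k : (halved s <= k%:R) = (h s <= k.*2)%N.
Proof.
rewrite /halved ler_pdivrMr ?ltr0n // -natrM ler_nat.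
by rewrite muln2.
Qed.

Lemma filt_halved (ss : seq (V + {set V})) i :
  crit_vals e halved = map halved ss -> (i < size ss)%N ->
  filt e halved i.+1 = ([set v | h (inl v) <= h (nth (inr set0) ss i)]%N,
                        [set A | is_edge e A && (h (inr A) <= h (nth (inr set0) ss i))%N]).
Proof.
move=> cv_ss lt_i; rewrite /filt cv_ss (nth_map (inr set0)) //.
by congr pair; apply/setP => x; rewrite !inE ler_halved.
Qed.

Section SinglePair.
Variables (v0 : V) (A0 : {set V}).
Definition paired s : bool := (s == inl v0) || (s == inr A0).

Hypotheses (edge_A0 : is_edge e A0) (v0_in_A0 : v0 \in A0).
Hypothesis h_pair : h (inl v0) = h (inr A0).
Hypothesis h_inj : {in [pred s | is_simplex e s && (s != inr A0)] &, injective h}.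

Lemma h_eq_paired s t : is_simplex e s -> is_simplex e t -> h s = h t ->
  s = t \/ paired s && paired t.
Proof.
have simp_v0 : is_simplex e (inl v0) by [].
have inj s' t' : is_simplex e s' -> is_simplex e t' -> s' != inr A0 -> t' != inr A0 ->
  h s' = h t' -> s' = t'.
  by move=> ss' st' sA tA; apply: h_inj; rewrite inE ?ss' ?st' ?sA ?tA.
move=> simp_s simp_t; rewrite /paired.
have [-> | sA] := eqVneq s (inr A0); have [-> | tA] := eqVneq t (inr A0) => hst.
- by left.
- have -> := inj _ _ simp_v0 simp_t isT tA (etrans h_pair hst).
  by right; rewrite !eqxx orbT.
- have -> := inj _ _ simp_s simp_v0 sA isT (etrans hst (esym h_pair)).
  by right; rewrite !eqxx orbT.
- by left; exact: inj.
Qed.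

Lemma critical_halved s : critical e halved s = is_simplex e s && ~~ paired s.
Proof.
apply/criticalP/andP => [[simp_s crit_s] | [simp_s unpaired_s]].
  split=> //; apply/negP => /orP [/eqP s_v0 | /eqP s_A0].
    by have := crit_s (inr A0) edge_A0; rewrite s_v0 /halved h_pair => /(_ erefl).
  by have := crit_s (inl v0) isT; rewrite s_A0 /halved h_pair => /(_ erefl).
split=> // t simp_t /eqP; rewrite eqr_halved => /eqP htp.
case: (h_eq_paired simp_t simp_s htp) => // /andP [_ paired_s].
by rewrite paired_s in unpaired_s.
Qed.

Hypothesis h_mono : forall v A, is_edge e A -> v \in A -> (h (inl v) <= h (inr A))%N.
Hypothesis h_bound : forall s, is_simplex e s -> (h s <= (n_simplices e).*2)%N.
Hypothesis h_min : exists2 s, is_simplex e s & h s = 0%N.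
Hypothesis h_even : forall s, is_simplex e s -> ~~ paired s -> ~~ odd (h s).

Lemma morse_halved : discrete_morse e halved.
Proof.
split; [| split; [| split; [| split; [| split]]]].
- by move=> v A edge_A vA; rewrite ler_halved h_mono.
- by move=> s simp_s; rewrite halved_le_nat h_bound // divr_ge0 ?ler0n.
- by case: h_min => s simp_s hs0; exists s; rewrite ?(halved_double (k := 0)).
- move=> s t u simp_s simp_t simp_u st tu su [/eqP hst /eqP htu].
  rewrite !eqr_halved in hst htu.
  case: (h_eq_paired simp_s simp_t (eqP hst)) => [/eqP | /andP [ps pt]].
    by rewrite (negbTE st).
  case: (h_eq_paired simp_t simp_u (eqP htu)) => [/eqP | /andP [_ pu]].
    by rewrite (negbTE tu).
  move: ps pt pu st tu su; rewrite /paired.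
  by move=> /orP [] /eqP -> /orP [] /eqP -> /orP [] /eqP ->; rewrite ?eqxx.
- move=> s t simp_s simp_t st /eqP; rewrite eqr_halved => /eqP hst.
  case: (h_eq_paired simp_s simp_t hst) => [/eqP | /andP [ps pt]].
    by rewrite (negbTE st).
  by move: ps pt st; rewrite /paired => /orP [] /eqP -> /orP [] /eqP ->;
    rewrite ?eqxx //= v0_in_A0 ?orbT.
- move=> s; rewrite critical_halved => /andP [simp_s unpaired_s].
  by exists (h s)./2; apply/halved_even/h_even.
Qed.

End SinglePair.
End HalfIntegerValued.
End MorseFunctions.

Section Equivalences.
Variables (V : finType) (e : rel V) (R : realFieldType) (F : fieldType).
Implicit Types (f g : V + {set V} -> R).

Lemma subgraph_iso_refl (VS : {set V}) (ES : {set {set V}}) : subgraph_iso VS ES VS ES.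
Proof.
exists id; split; first by move=> x y.
  exact: imset_id.
by under eq_imset => A do rewrite imset_id; exact: imset_id.
Qed.

Lemma subgraph_iso_card (VS1 VS2 : {set V}) (ES1 ES2 : {set {set V}}) :
  subgraph_iso VS1 ES1 VS2 ES2 -> #|VS1| = #|VS2|.
Proof. by case=> h [h_inj <- _]; rewrite card_in_imset. Qed.

Lemma graph_equiv_of_filt f g :
  size (crit_vals e f) = size (crit_vals e g) ->
  (forall i, (i < size (crit_vals e f))%N -> filt e f i.+1 = filt e g i.+1) ->
  graph_equiv e f g.
Proof.
move=> eq_size eq_filt; split=> // i lt_i_m.
by have [-> ->] := eq_filt i lt_i_m; exact: subgraph_iso_refl.
Qed.

Lemma graph_equiv_card_level f g i : graph_equiv e f g ->
  (i < size (crit_vals e f))%N -> #|(filt e f i.+1).1| = #|(filt e g i.+1).1|.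
Proof. by case=> _ iso_levels /iso_levels /subgraph_iso_card. Qed.

Lemma persistence_equiv_of_pb f g : crit_vals e f = crit_vals e g ->
  (forall p i j, (i <= j <= size (crit_vals e f))%N -> pb e F f p i j = pb e F g p i j) ->
  persistence_equiv e F f g.
Proof.
move=> eq_cv eq_pb p b d; rewrite /pdiagram -eq_cv.
congr (_ + _); apply: eq_bigr => i _.
  apply: eq_bigr => j lt_ij; case: ifP => // _; have lt_jm := ltn_ord j.
  by rewrite /mult !eq_pb //; apply/andP; split; lia.
case: ifP => // _; have lt_im := ltn_ord i.
by rewrite /mult_inf -eq_cv !eq_pb //; apply/andP; split; lia.
Qed.

Lemma pdiagram_not_crit f p b d : d \notin crit_vals e f ->
  pdiagram e F f p b (Some d) = 0.
Proof.
move=> d_notin; rewrite /pdiagram [X in _ + X]big1 => [|i _]; last first.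
  by case: ifP => // /andP [_ /eqP].
rewrite addr0 big1 // => i _; apply: big1 => j _.
case: ifP => // /andP [_ /eqP [d_j]].
by rewrite d_j mem_nth in d_notin.
Qed.

Lemma pdiagram_crit f p i j : (i < j < size (crit_vals e f))%N ->
  pdiagram e F f p (nth 0 (crit_vals e f) i) (Some (nth 0 (crit_vals e f) j))
  = mult e F f p i j.
Proof.
move=> /andP [lt_ij lt_jm]; have lt_im := ltn_trans lt_ij lt_jm.
rewrite /pdiagram [X in _ + X]big1 => [|k _]; last by case: ifP => // /andP [_ /eqP].
rewrite addr0 (bigD1 (Ordinal lt_im)) //= [X in _ + X]big1 => [|k]; last first.
  rewrite -val_eqE /= => k_i; apply: big1 => l _.
  by rewrite nth_uniq ?crit_vals_uniq ?ltn_ord // eq_sym (negbTE k_i).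
rewrite addr0 (bigD1 (Ordinal lt_jm)) ?lt_ij //= !eqxx /= big1 ?addr0 // => l.
rewrite -val_eqE /= => /andP [_ l_j].
case: eqP => // -[/eqP].
by rewrite nth_uniq ?crit_vals_uniq ?ltn_ord // eq_sym (negbTE l_j).
Qed.

End Equivalences.

Section Chains.
Variables (F : fieldType) (V : finType).

Lemma span_vanish (vT : vectType F) (phi : vT -> F) (X : seq vT) :
  {morph phi : x y / x + y} -> (forall k x, phi (k *: x) = k * phi x) ->
  {in X, forall x, phi x = 0} -> {in <<X>>%VS, forall y, phi y = 0}.
Proof.
move=> phiD phiZ phiX y y_span.
have phi0 : phi 0 = 0 by rewrite -(scale0r (0 : vT)) phiZ mul0r.
rewrite (coord_span (X := in_tuple X) y_span) (big_morph phi phiD phi0) big1 // => i _.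
by rewrite phiZ phiX ?mulr0 // mem_nth.
Qed.

Lemma chain0_eval_vanish (v : V) (X : seq (C0 V F)) :
  {in X, forall x : C0 V F, x v = 0} -> {in <<X>>%VS, forall y : C0 V F, y v = 0}.
Proof. by apply: span_vanish => [x y | k x]; rewrite ffunE. Qed.

Lemma chains0_vanish (S : {set V}) (x : C0 V F) v :
  x \in chains0 F S -> v \notin S -> x v = 0.
Proof.
move=> x_S v_notin; apply: chain0_eval_vanish x_S => _ /mapP [w w_S ->].
rewrite ffunE; case: eqP => // v_w.
by rewrite mem_enum -v_w (negbTE v_notin) in w_S.
Qed.

Lemma chains0P (S : {set V}) (x : C0 V F) :
  reflect (forall v, v \notin S -> x v = 0) (x \in chains0 F S).
Proof.
apply: (iffP idP) => [x_S v | x_supp]; first exact: chains0_vanish.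
have -> : x = \sum_v x v *: chi0 F v.
  apply/ffunP => w; rewrite sum_ffunE (bigD1 w) //= big1 => [|v v_w].
    by rewrite !ffunE eqxx addr0; exact: (esym (mulr1 _)).
  by rewrite !ffunE eq_sym (negbTE v_w) scaler0.
apply: memv_suml => v _; have [v_S | v_notin] := boolP (v \in S).
  by apply/memvZ/memv_span/map_f; rewrite mem_enum.
by rewrite x_supp // scale0r mem0v.
Qed.

Lemma free_chi0 (s : seq V) : uniq s -> free (map (chi0 F) s).
Proof.
elim: s => [|v s IH] /=; first by rewrite nil_free.
case/andP => v_notin uniq_s; rewrite free_cons IH // andbT.
apply/negP => chi_v_span.
have : chi0 F v v = 0.
  apply: chain0_eval_vanish chi_v_span => _ /mapP [w w_s ->].
  by rewrite ffunE; case: eqP => // v_w; rewrite v_w w_s in v_notin.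
by rewrite ffunE eqxx => /eqP; rewrite oner_eq0.
Qed.

Lemma dim_chains0 (S : {set V}) : \dim (chains0 F S) = #|S|.
Proof. by rewrite cardE -(size_map (chi0 F)); apply/eqP/free_chi0/enum_uniq. Qed.

Lemma chains1_vanish (ES : {set {set V}}) (x : C1 V F) B :
  x \in chains1 F ES -> B \notin ES -> x B = 0.
Proof.
move=> x_ES B_notin.
apply: (span_vanish (phi := fun y : C1 V F => y B)) x_ES
  => [y z | k y | _ /mapP [A A_ES ->]].
- by rewrite ffunE.
- by rewrite ffunE.
- rewrite ffunE; case: eqP => // B_A.
  by rewrite mem_enum -B_A (negbTE B_notin) in A_ES.
Qed.

Lemma bd_out (A : {set V}) v : v \notin A -> bd F A v = 0.
Proof. by move=> v_notin; rewrite ffunE (negbTE v_notin). Qed.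

Lemma bd_neq0 (A : {set V}) v : v \in A -> bd F A v != 0.
Proof. by move=> v_A; rewrite ffunE v_A; case: ifP; rewrite ?oppr_eq0 oner_eq0. Qed.

Lemma bd_vec_neq0 (A : {set V}) v : v \in A -> bd F A != 0.
Proof. by move/bd_neq0; apply: contraTneq => ->; rewrite ffunE eqxx. Qed.

Lemma dim_bounds0_set0 : \dim (bounds0 F (set0 : {set {set V}})) = 0%N.
Proof. by rewrite /bounds0 enum_set0 span_nil dimv0. Qed.

Lemma dim_bounds0_set1 (A : {set V}) v : v \in A -> \dim (bounds0 F [set A]) = 1%N.
Proof.
by move=> v_A; rewrite /bounds0 enum_set1 span_seq1 dim_vline (bd_vec_neq0 v_A).
Qed.

Lemma sum_bd (A : {set V}) : #|A| = 2 -> \sum_v bd F A v = 0.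
Proof.
move/eqP/cards2P => [x [y [x_y ->]]].
have lt_rank a b : [exists w in [set a; b], enum_rank w < enum_rank a]%N
                   = (enum_rank b < enum_rank a)%N.
  apply/existsP/idP => [[w /andP []] | lt_ba]; last by exists b; rewrite !inE eqxx orbT.
  by rewrite !inE => /orP [] /eqP ->; rewrite ?ltnn.
rewrite (bigD1 x) // (bigD1 y) /= 1?eq_sym // big1 => [|v /andP [v_x v_y]]; last first.
  by rewrite bd_out // !inE negb_or v_x.
rewrite addr0 !ffunE !inE !eqxx orbT /= lt_rank setUC lt_rank.
case: ltngtP => [||/val_inj/enum_rank_inj x_eq_y]; rewrite ?addrN ?addNr //.
by rewrite x_eq_y eqxx in x_y.
Qed.

Lemma bounds0_sub (S : {set V}) (ES : {set {set V}}) :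
  (forall A, A \in ES -> A \subset S) -> (bounds0 F ES <= chains0 F S)%VS.
Proof.
move=> ES_S; apply/span_subvP => _ /mapP [A A_ES ->]; rewrite mem_enum in A_ES.
apply/chains0P => v v_notin; apply: bd_out; apply: contra v_notin.
exact/subsetP/ES_S.
Qed.

Lemma bounds0_sum0 (ES : {set {set V}}) (y : C0 V F) :
  (forall A, A \in ES -> #|A| = 2) -> y \in bounds0 F ES -> \sum_v y v = 0.
Proof.
move=> ES_2; apply: (span_vanish (phi := fun x : C0 V F => \sum_v x v))
  => [x z | k x | _ /mapP [A A_ES ->]].
- by rewrite -big_split; apply: eq_bigr => v _; rewrite ffunE.
- by rewrite mulr_sumr; apply: eq_bigr => v _; rewrite ffunE.
- by rewrite sum_bd // ES_2 // -mem_enum.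
Qed.

Lemma capv_chains0_set1_bounds0 (v : V) (ES : {set {set V}}) :
  (forall A, A \in ES -> #|A| = 2) -> (chains0 F [set v] :&: bounds0 F ES)%VS = 0%VS.
Proof.
move=> ES_2; apply/eqP; rewrite -subv0; apply/subvP => x.
rewrite memv_cap memv0 => /andP [/chains0P x_v /(bounds0_sum0 ES_2) sum_x].
have x_out w : w != v -> x w = 0 by move=> w_v; rewrite x_v // inE.
have x_v0 : x v = 0 by rewrite -sum_x (bigD1 v) //= big1 ?addr0 // => w /x_out.
by apply/eqP/ffunP => w; rewrite ffunE; have [-> | /x_out] := eqVneq w v.
Qed.

End Chains.

Section Boundary.
Variables (F : fieldType) (V : finType) (e : rel V).

Lemma boundary_is_linear : linear (boundary e (F:=F)).
Proof.
move=> k x y; rewrite /boundary scaler_sumr -big_split; apply: eq_bigr => A _.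
by rewrite !ffunE scalerDl scalerA.
Qed.

HB.instance Definition _ :=
  GRing.isLinear.Build F (C1 V F) (C0 V F) _ (boundary e (F:=F)) boundary_is_linear.

End Boundary.

Section PersistentBetti0.
Variables (F : fieldType) (V : finType) (e : rel V).
Hypothesis e_irr : irreflexive e.
Implicit Types (K L : {set V} * {set {set V}}).

Lemma card_edge (A : {set V}) : is_edge e A -> #|A| = 2.
Proof.
case/existsP => x /existsP [y /andP [exy /eqP ->]]; rewrite cards2.
by case: eqVneq exy => [-> | //]; rewrite e_irr.
Qed.

Lemma pbetti0_set0 (E : {set {set V}}) L : pbetti e F 0 (set0, E) L = 0%N.
Proof. by rewrite /pbetti dim_chains0 cards0. Qed.

Lemma pbetti0_set1 v (E : {set {set V}}) L :
  L.2 \subset edges e -> pbetti e F 0 ([set v], E) L = 1%N.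
Proof.
move=> /subsetP L_edges; rewrite /pbetti /= dim_chains0 cards1.
rewrite capv_chains0_set1_bounds0 ?dimv0 // => A /L_edges.
by rewrite inE => /card_edge.
Qed.

Lemma pbetti0_sub K L : \bigcup_(A in L.2) A \subset K.1 ->
  pbetti e F 0 K L = (#|K.1| - \dim (bounds0 F L.2))%N.
Proof.
move=> L_K; rewrite /pbetti /= dim_chains0 (capv_idPr (bounds0_sub F _)) // => A A_L.
exact: subset_trans (bigcup_sup _ A_L) L_K.
Qed.

End PersistentBetti0.

Definition p0 : 'I_3 := @Ordinal 3 0 isT.
Definition p1 : 'I_3 := @Ordinal 3 1 isT.
Definition p2 : 'I_3 := @Ordinal 3 2 isT.

Definition path3 : rel 'I_3 := fun x y => (x.+1 == y :> nat) || (y.+1 == x :> nat).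

Definition E01 : {set 'I_3} := [set p0; p1].
Definition E12 : {set 'I_3} := [set p1; p2].

Lemma ord3_ind (P : 'I_3 -> Prop) : P p0 -> P p1 -> P p2 -> forall x, P x.
Proof.
move=> P0 P1 P2 [[|[|[|//]]] lt_x3].
- by rewrite (_ : Ordinal lt_x3 = p0) //; apply: val_inj.
- by rewrite (_ : Ordinal lt_x3 = p1) //; apply: val_inj.
- by rewrite (_ : Ordinal lt_x3 = p2) //; apply: val_inj.
Qed.

Lemma E01_neq_E12 : (E01 == E12) = false.
Proof. by apply/eqP => /setP /(_ p0); rewrite !inE. Qed.

Lemma E12_neq_E01 : (E12 == E01) = false.
Proof. by rewrite eq_sym E01_neq_E12. Qed.

Lemma inr_eqE (A B : {set 'I_3}) : (inr A == inr B :> 'I_3 + {set 'I_3}) = (A == B).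
Proof. by []. Qed.

Definition path3E := (eqxx, inr_eqE, E01_neq_E12, E12_neq_E01).

Lemma edge_E01 : is_edge path3 E01.
Proof. by apply/existsP; exists p0; apply/existsP; exists p1; rewrite eqxx. Qed.

Lemma edge_E12 : is_edge path3 E12.
Proof. by apply/existsP; exists p1; apply/existsP; exists p2; rewrite eqxx. Qed.

Lemma edge_path3_cases A : is_edge path3 A -> A = E01 \/ A = E12.
Proof.
move=> /existsP [x /existsP [y /andP [xy /eqP ->]]]; move: x y xy.
by apply: ord3_ind; apply: ord3_ind => //= _; rewrite /E01 /E12 setUC; auto.
Qed.

Lemma path3_irr : irreflexive path3.
Proof. exact: ord3_ind. Qed.

Lemma path3_tree : is_tree path3.
Proof.
have path3_sym : symmetric path3 by move=> x y; rewrite /path3 orbC.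
split; [by split; [exact: path3_irr |] | by rewrite card_ord | |].
- have from_p0 : forall x, connect path3 p0 x.
    apply: ord3_ind; first exact: connect0; first exact: connect1.
    by apply: (@connect_trans _ _ p1); exact: connect1.
  by move=> x y; rewrite (connect_trans _ (from_p0 y)) // sym_connect_sym.
- move=> s size_s; apply/negP => /andP [cyc_s uniq_s].
  have : (size s <= 3)%N.
    by rewrite -(card_uniqP uniq_s); apply: leq_trans (max_card _) _; rewrite card_ord.
  case: s size_s cyc_s uniq_s => [|x [|y [|z [|w s]]]] //= _.
  by move: x y z; do 3!apply: ord3_ind.
Qed.

Lemma edges_path3 : edges path3 = [set E01; E12].
Proof.
apply/setP => A; rewrite !inE; apply/idP/idP => [/edge_path3_cases [] -> | /orP [] /eqP ->];
  by rewrite ?eqxx ?orbT ?edge_E01 ?edge_E12.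
Qed.

Lemma path3_vset (P : pred 'I_3) (S : {set 'I_3}) :
  P p0 = (p0 \in S) -> P p1 = (p1 \in S) -> P p2 = (p2 \in S) -> [set v | P v] = S.
Proof. by move=> P0 P1 P2; apply/setP; apply: ord3_ind; rewrite inE. Qed.

Lemma path3_eset (P : pred {set 'I_3}) (T : {set {set 'I_3}}) : T \subset edges path3 ->
  P E01 = (E01 \in T) -> P E12 = (E12 \in T) -> [set A | is_edge path3 A && P A] = T.
Proof.
move=> /subsetP T_edges P01 P12; apply/setP => A; rewrite inE.
have [/edge_path3_cases [] -> // | not_edge] := boolP (is_edge path3 A).
by apply/esym/negbTE; apply: contra not_edge => /T_edges; rewrite inE.
Qed.

Section Homology.
Variable F : fieldType.

Lemma cycles1_path3 (ES : {set {set 'I_3}}) :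
  (forall A, A \in ES -> is_edge path3 A) -> cycles1 path3 F ES = 0%VS.
Proof.
move=> ES_edges; apply/eqP; rewrite -subv0; apply/subvP => x.
rewrite memv_cap memv0 memv_ker lfunE /= => /andP [x_ES /eqP bd_x].
have bd_xE : boundary path3 x = x E01 *: bd F E01 + x E12 *: bd F E12.
  by rewrite /boundary edges_path3 big_setU1 ?big_set1 // inE E01_neq_E12.
have x_edge (v : 'I_3) (A B : {set 'I_3}) :
    v \in A -> v \notin B -> x A *: bd F A + x B *: bd F B = 0 -> x A = 0.
  move=> v_A v_B /(congr1 (fun y : C0 _ F => y v)).
  have evalZ k (y : C0 'I_3 F) : (k *: y) v = k * y v by rewrite ffunE.
  rewrite ffunE !evalZ [bd F B v]bd_out // mulr0 addr0 => /eqP.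
  by rewrite [X in _ == X]ffunE mulf_eq0 (negbTE (bd_neq0 F v_A)) orbF => /eqP.
have x01 : x E01 = 0 by apply: (@x_edge p0 _ E12); rewrite -?bd_xE ?bd_x // !inE.
have x12 : x E12 = 0 by apply: (@x_edge p2 _ E01); rewrite 1?addrC -?bd_xE ?bd_x // !inE.
apply/eqP/ffunP => B; rewrite ffunE.
have [B_ES | /(chains1_vanish x_ES) //] := boolP (B \in ES).
by case/edge_path3_cases: (ES_edges B B_ES) => ->.
Qed.

Lemma pbetti1_path3 (K L : {set 'I_3} * {set {set 'I_3}}) :
  (forall A, A \in K.2 -> is_edge path3 A) -> pbetti path3 F 1 K L = 0%N.
Proof. by move=> K_edges; rewrite /pbetti cycles1_path3 // dimv0. Qed.

Lemma dim_bounds0_E01_E12 : \dim (bounds0 F [set E01; E12]) = 2%N.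
Proof.
have -> : bounds0 F [set E01; E12] = <<[:: bd F E01; bd F E12]>>%VS.
  apply: eq_span => z; apply/mapP/idP => [[A] | ].
    by rewrite mem_enum !inE => /orP [] /eqP -> ->; rewrite eqxx ?orbT.
  rewrite !inE => /orP [] /eqP ->; [exists E01 | exists E12] => //;
    by rewrite mem_enum !inE eqxx ?orbT.
suff /eqP : free [:: bd F E01; bd F E12] by [].
rewrite free_cons seq1_free.
have bd01_p0 : bd F E01 p0 != 0 by rewrite bd_neq0 // !inE eqxx.
apply/andP; split; last first.
  by apply: (@bd_vec_neq0 F _ _ p1); rewrite !inE eqxx.
apply: contra bd01_p0 => bd01_span; apply/eqP.
apply: (chain0_eval_vanish _ bd01_span) => y; rewrite inE => /eqP ->.
by rewrite bd_out // !inE.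
Qed.

End Homology.

Section Path3Morse.
Variable R : realFieldType.

Definition path3_simplices : seq ('I_3 + {set 'I_3}) :=
  [:: inl p0; inl p1; inl p2; inr E01; inr E12].

Lemma path3_simplexE s : is_simplex path3 s = (s \in path3_simplices).
Proof.
case: s => [x | A] /=; first by move: x; apply: ord3_ind.
rewrite !inE /=; apply/idP/idP => [/edge_path3_cases [] -> | /orP [] /eqP [->]];
  by rewrite ?eqxx ?orbT ?edge_E01 ?edge_E12.
Qed.

Lemma n_simplices_path3 : n_simplices path3 = 5%N.
Proof. by rewrite /n_simplices edges_path3 card_ord cards2 E01_neq_E12. Qed.

(* A decidable criterion for [halved h] to be a discrete Morse function on the path
   whose only regular pair is (v0, A0). *)
Definition path3_morse_data (h : 'I_3 + {set 'I_3} -> nat) v0 A0 : bool :=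
  [&& is_edge path3 A0, v0 \in A0, h (inl v0) == h (inr A0), h (inl p0) == 0%N &
    [&& [&& h (inl p0) <= h (inr E01), h (inl p1) <= h (inr E01),
            h (inl p1) <= h (inr E12) & h (inl p2) <= h (inr E12)]%N,
        all (fun s => h s <= 10)%N path3_simplices,
        all (fun s => paired v0 A0 s || ~~ odd (h s)) path3_simplices &
        uniq [seq h s | s <- path3_simplices & s != inr A0]]].

Variables (h : 'I_3 + {set 'I_3} -> nat) (v0 : 'I_3) (A0 : {set 'I_3}).
Hypothesis h_data : path3_morse_data h v0 A0.

Lemma path3_inj : {in [pred s | is_simplex path3 s && (s != inr A0)] &, injective h}.
Proof.
case/and5P: h_data => _ _ _ _ /and4P [_ _ _ uniq_h].
apply: sub_in2 (inj_in_of_uniq_map uniq_h) => s.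
by rewrite inE mem_filter path3_simplexE andbC.
Qed.

Lemma morse_path3 : discrete_morse path3 (halved R h).
Proof.
case/and5P: h_data => edge_A0 v0_A0 /eqP h_pair /eqP h_p0 /and4P [mono bound even _].
apply: (morse_halved R edge_A0 v0_A0 h_pair path3_inj).
- case/and4P: mono => le0 le1 le1' le2 v A /edge_path3_cases [] ->;
    by move: v; apply: ord3_ind; rewrite !inE.
- by rewrite n_simplices_path3 => s; rewrite path3_simplexE => /(allP bound).
- by exists (inl p0).
- by move=> s; rewrite path3_simplexE => /(allP even) /orP [-> | ].
Qed.

Lemma crit_vals_path3 :
  sorted ltn [seq h s | s <- path3_simplices & ~~ paired v0 A0 s] ->
  crit_vals path3 (halved R h)
  = [seq halved R h s | s <- path3_simplices & ~~ paired v0 A0 s].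
Proof.
case/and5P: h_data => edge_A0 _ /eqP h_pair _ _ sorted_h; apply: crit_valsE => [s | ].
  rewrite -[s \in critical _ _]/(critical path3 (halved R h) s).
  by rewrite (critical_halved R edge_A0 h_pair path3_inj) mem_filter path3_simplexE andbC.
rewrite sorted_map; rewrite sorted_map in sorted_h.
by apply: sub_sorted sorted_h => s t /=; rewrite ltr_halved.
Qed.

End Path3Morse.

(* Twice the values on 0, 1, 2, {0,1}, {1,2}; the last one is also the junk value
   of the non-edges. *)
Definition path3_vals (x0 x1 x2 y01 y12 : nat) (s : 'I_3 + {set 'I_3}) : nat :=
  match s with
  | inl x => nth 0%N [:: x0; x1; x2] x
  | inr A => if A == E01 then y01 else y12
  end.

Definition f_vals := path3_vals 0 1 2 1 4.
Definition g_vals := path3_vals 0 1 2 1 6.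
Definition p_vals := path3_vals 0 2 6 4 6.

Lemma f_vals_data : path3_morse_data f_vals p1 E01.
Proof. by rewrite /path3_morse_data /paired /= edge_E01 !inE /= !path3E /= !path3E. Qed.

Lemma g_vals_data : path3_morse_data g_vals p1 E01.
Proof. by rewrite /path3_morse_data /paired /= edge_E01 !inE /= !path3E /= !path3E. Qed.

Lemma p_vals_data : path3_morse_data p_vals p2 E12.
Proof. by rewrite /path3_morse_data /paired /= edge_E12 !inE /= !path3E /= !path3E. Qed.

Section Examples.
Variable R : realFieldType.

Lemma crit_vals_f :
  crit_vals path3 (halved R f_vals) = map (halved R f_vals) [:: inl p0; inl p2; inr E12].
Proof. by rewrite (crit_vals_path3 R f_vals_data) /paired /= ?path3E /= ?path3E. Qed.

Lemma crit_vals_g :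
  crit_vals path3 (halved R g_vals) = map (halved R g_vals) [:: inl p0; inl p2; inr E12].
Proof. by rewrite (crit_vals_path3 R g_vals_data) /paired /= ?path3E /= ?path3E. Qed.

Lemma crit_vals_p :
  crit_vals path3 (halved R p_vals) = map (halved R p_vals) [:: inl p0; inl p1; inr E01].
Proof. by rewrite (crit_vals_path3 R p_vals_data) /paired /= ?path3E /= ?path3E. Qed.

Lemma filt_f :
  [/\ filt path3 (halved R f_vals) 1 = ([set p0], set0),
      filt path3 (halved R f_vals) 2 = (setT, [set E01]) &
      filt path3 (halved R f_vals) 3 = (setT, [set E01; E12])].
Proof.
split; rewrite (filt_halved crit_vals_f) //= ?path3E; congr pair;
  first [apply: path3_vset | apply: path3_eset];
  by rewrite ?inE ?path3E // edges_path3 ?sub0set ?sub1set ?subxx ?inE ?eqxx.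
Qed.

Lemma filt_g :
  [/\ filt path3 (halved R g_vals) 1 = ([set p0], set0),
      filt path3 (halved R g_vals) 2 = (setT, [set E01]) &
      filt path3 (halved R g_vals) 3 = (setT, [set E01; E12])].
Proof.
split; rewrite (filt_halved crit_vals_g) //= ?path3E; congr pair;
  first [apply: path3_vset | apply: path3_eset];
  by rewrite ?inE ?path3E // edges_path3 ?sub0set ?sub1set ?subxx ?inE ?eqxx.
Qed.

Lemma filt_p :
  [/\ filt path3 (halved R p_vals) 1 = ([set p0], set0),
      filt path3 (halved R p_vals) 2 = ([set p0; p1], set0) &
      filt path3 (halved R p_vals) 3 = ([set p0; p1], [set E01])].
Proof.
split; rewrite (filt_halved crit_vals_p) //= ?path3E; congr pair;
  first [apply: path3_vset | apply: path3_eset];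
  by rewrite ?inE ?path3E // edges_path3 ?sub0set ?sub1set ?subxx ?inE ?eqxx.
Qed.

Lemma graph_equiv_fg : graph_equiv path3 (halved R f_vals) (halved R g_vals).
Proof.
apply: graph_equiv_of_filt; first by rewrite crit_vals_f crit_vals_g.
rewrite crit_vals_f; case: filt_f filt_g => [f1 f2 f3] [g1 g2 g3].
by case=> [|[|[|]]] // _; rewrite ?f1 ?f2 ?f3 ?g1 ?g2 ?g3.
Qed.

Lemma not_graph_equiv_fp : ~ graph_equiv path3 (halved R f_vals) (halved R p_vals).
Proof.
move/(graph_equiv_card_level (i := 1)); rewrite crit_vals_f.
by case: filt_f filt_p => [_ -> _] [_ -> _] /(_ isT); rewrite cardsT card_ord cards2.
Qed.

Variable F : fieldType.

Lemma mult_f : mult path3 F (halved R f_vals) 0 1 2 = 1.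
Proof.
rewrite /mult /pb; case: filt_f => -> -> ->.
rewrite !(pbetti0_set1 F path3_irr) ?pbetti0_sub /=;
  try by rewrite ?subsetT // edges_path3 ?sub1set ?inE ?eqxx ?subxx.
rewrite cardsT card_ord (@dim_bounds0_set1 F _ E01 p0) ?inE ?eqxx //.
by rewrite dim_bounds0_E01_E12.
Qed.

Lemma not_persistence_equiv_fg :
  ~ persistence_equiv path3 F (halved R f_vals) (halved R g_vals).
Proof.
set cv := crit_vals path3 (halved R f_vals).
move/(_ 0%N (nth 0 cv 1) (Some (nth 0 cv 2))); rewrite pdiagram_crit ?crit_vals_f //.
rewrite mult_f pdiagram_not_crit ?oner_eq0 //.
rewrite /cv crit_vals_f crit_vals_g /= !inE !halved_even /= ?path3E //.
by rewrite pnatr_eq0 pnatr_eq1 eqr_nat.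
Qed.

Lemma pb0_fp i j : (i <= j <= 3)%N ->
  pb path3 F (halved R f_vals) 0 i j = pb path3 F (halved R p_vals) 0 i j.
Proof.
case: filt_f filt_p => [f1 f2 f3] [p1' p2' p3'] /andP [].
move: i j => [|[|[|[|i]]]] [|[|[|[|j]]]] // _ _; rewrite /pb ?f1 ?f2 ?f3 ?p1' ?p2' ?p3'.
all: rewrite ?pbetti0_set0 ?(pbetti0_set1 F path3_irr) ?pbetti0_sub.
all: rewrite /= ?big_set0 ?big_set1 ?subsetT ?sub0set ?subxx //.
all: try by rewrite edges_path3 ?sub1set ?inE ?eqxx ?subxx.
all: by rewrite ?cardsT ?card_ord ?cards2 ?dim_bounds0_set0 ?dim_bounds0_E01_E12
                ?(@dim_bounds0_set1 F _ E01 p0) ?inE ?eqxx.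
Qed.

Lemma persistence_equiv_fp : persistence_equiv path3 F (halved R f_vals) (halved R p_vals).
Proof.
apply: persistence_equiv_of_pb.
  by rewrite crit_vals_f crit_vals_p /= !halved_even /= ?path3E.
rewrite crit_vals_f => -[|[|p]] i j ij3.
- exact: pb0_fp.
- by rewrite /pb !pbetti1_path3 // => A /filt_edges.
- by rewrite /pb /pbetti.
Qed.

End Examples.

Theorem mainTheorem10 :
  forall (R : realFieldType) (F : fieldType),
  exists (V : finType) (e : rel V),
    is_tree e /\
    (exists f g : V + {set V} -> R,
        [/\ discrete_morse e f, discrete_morse e g,
            graph_equiv e f g & ~ persistence_equiv e F f g]) /\
    (exists f g : V + {set V} -> R,
        [/\ discrete_morse e f, discrete_morse e g,
            persistence_equiv e F f g & ~ graph_equiv e f g]).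
Proof.
move=> R F; exists ('I_3 : finType), path3; split; first exact: path3_tree.
split.
- exists (halved R f_vals), (halved R g_vals); split.
  + exact: morse_path3 f_vals_data.
  + exact: morse_path3 g_vals_data.
  + exact: graph_equiv_fg.
  + exact: not_persistence_equiv_fg.
- exists (halved R f_vals), (halved R p_vals); split.
  + exact: morse_path3 f_vals_data.
  + exact: morse_path3 p_vals_data.
  + exact: persistence_equiv_fp.
  + exact: not_graph_equiv_fp.
Qed.
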